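(* For all $n, k \in \mathbb{N}$, the quotient set $(\Sigma^{\mathrm{CoR}}_{n})_{\le k}/{\sim_{\mathrm{REL}}}$ is finite; i.e., up to semantic equivalence over all structures, there are only finitely many CoR terms in the level $\Sigma^{\mathrm{CoR}}_n$ of the dot-dagger alternation hierarchy having at most $k$ occurrences of variables.
   Context: Fix a non-empty finite set $V$ of variables. CoR terms are generated by $t ::= a \mid \bot \mid \top \mid t \cup t \mid t \cap t \mid t^{-} \mid \mathrm{I} \mid \mathrm{D} \mid t \cdot t \mid t \dagger t \mid t^{\pi}$, where $a \in V$ and $\pi$ ranges over all maps $\{1,2\}\to\{1,2\}$; $t^{\smile}$ abbreviates $t^{\pi}$ with $\pi = \{1\mapsto 2, 2\mapsto 1\}$. A structure $M$ consists of a non-empty set $|M|$ and a binary relation $a^M \subseteq |M|^2$ for each $a \in V$. The interpretation $[\![t]\!]_M \subseteq |M|^2$ is: $[\![a]\!]_M = a^M$, $[\![\bot]\!]_M=\emptyset$, $[\![\top]\!]_M = |M|^2$, $\cup,\cap$ set-theoretic, $[\![t^-]\!]_M = |M|^2\setminus[\![t]\!]_M$, $[\![\mathrm{I}]\!]_M=\{(x,y): x=y\}$, $[\![\mathrm{D}]\!]_M=\{(x,y): x\ne y\}$, $R\cdot S = \{(x,y) : \exists z,\ (x,z)\in R \wedge (z,y)\in S\}$, $R \dagger S = \{(x,y) : \forall z,\ (x,z)\in R \vee (z,y)\in S\}$, $R^{\pi} = \{(x_1,x_2) : (x_{\pi(1)}, x_{\pi(2)}) \in R\}$. $\mathrm{REL}$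 is the class of all structures. For a class $\mathcal{C}$ of structures, $t \sim_{\mathcal{C}} s$ iff $[\![t]\!]_M = [\![s]\!]_M$ for all $M \in \mathcal{C}$. For a term $t$, $\mathrm{vo}(t)$ is the number of occurrences of variables in $t$, and for a set $S$ of terms, $S_{\le k} = \{t \in S : \mathrm{vo}(t) \le k\}$. The dot-dagger alternation hierarchy: $\Sigma^{\mathrm{CoR}}_n, \Pi^{\mathrm{CoR}}_n$ ($n\in\mathbb{N}$) are the least sets such that $\Sigma^{\mathrm{CoR}}_0=\Pi^{\mathrm{CoR}}_0$ is the set of terms containing neither $\cdot$ nor $\dagger$; $\Sigma^{\mathrm{CoR}}_n\cup\Pi^{\mathrm{CoR}}_n \subseteq \Sigma^{\mathrm{CoR}}_{n+1}\cap\Pi^{\mathrm{CoR}}_{n+1}$; for $n\ge1$, if $s,u\in\Sigma^{\mathrm{CoR}}_n$ then $s\cup u, s\cap u, s\cdot u, s^{\pi}\in\Sigma^{\mathrm{CoR}}_n$ and $s\dagger u\in\Pi^{\mathrm{CoR}}_{n+1}$; for $n\ge1$, if $s,u\in\Pi^{\mathrm{CoR}}_n$ then $s\cup u,s\cap u,s\dagger u,s^{\pi}\in\Pi^{\mathrm{CoR}}_n$ and $s\cdot u\in\Sigma^{\mathrm{CoR}}_{n+1}$. *)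

From mathcomp Require Import all_boot.
Set Implicit Arguments. Unset Strict Implicit. Unset Printing Implicit Defensive.

(* CoR terms over a variable set V; pi ranges over all maps {1,2} -> {1,2},
   represented as finite functions 'I_2 -> 'I_2 (ord0 = 1, ord1 = 2). *)
Inductive term (V : Type) : Type :=
| tvar of V
| tbot
| ttop
| tcup of term V & term V
| tcap of term V & term V
| tcompl of term V
| tI
| tD
| tdot of term V & term V
| tdag of term V & term V
| tperm of {ffun 'I_2 -> 'I_2} & term V.

Arguments tbot {V}. Arguments ttop {V}. Arguments tI {V}. Arguments tD {V}.

Fixpoint vo V (t : term V) : nat :=
  match t with
  | tvar _ => 1
  | tbot | ttop | tI | tD => 0
  | tcup s u | tcap s u | tdot s u | tdag s u => vo s + vo u
  | tcompl s | tperm _ s => vo s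
  end.

Fixpoint sem V (T : Type) (ev : V -> T -> T -> Prop) (t : term V) : T -> T -> Prop :=
  match t with
  | tvar a => ev a
  | tbot => fun _ _ => False
  | ttop => fun _ _ => True
  | tcup s u => fun x y => sem ev s x y \/ sem ev u x y
  | tcap s u => fun x y => sem ev s x y /\ sem ev u x y
  | tcompl s => fun x y => ~ sem ev s x y
  | tI => fun x y => x = y
  | tD => fun x y => x <> y
  | tdot s u => fun x y => exists z, sem ev s x z /\ sem ev u z y
  | tdag s u => fun x y => forall z, sem ev s x z \/ sem ev u z y
  | tperm p s => fun x y =>
      let xs (i : 'I_2) := if nat_of_ord i == 0 then x else y in
      sem ev s (xs (p (@Ordinal 2 0 isT))) (xs (p (@Ordinal 2 1 isT)))
  end.

(* equivalence over REL: all structures (non-empty carrier) *)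
Definition rel_equiv V (t s : term V) : Prop :=
  forall (T : Type) (ev : V -> T -> T -> Prop), inhabited T ->
    forall x y : T, sem ev t x y <-> sem ev s x y.

Fixpoint dd_free V (t : term V) : bool :=
  match t with
  | tdot _ _ | tdag _ _ => false
  | tcup s u | tcap s u => dd_free s && dd_free u
  | tcompl s | tperm _ s => dd_free s
  | _ => true
  end.

Inductive Sigma V : nat -> term V -> Prop :=
| Sigma0 t : dd_free t -> Sigma 0 t
| SigmaS n t : Sigma n t -> Sigma n.+1 t
| SigmaP n t : Pi n t -> Sigma n.+1 t
| Sigma_cup n s u : Sigma n.+1 s -> Sigma n.+1 u -> Sigma n.+1 (tcup s u)
| Sigma_cap n s u : Sigma n.+1 s -> Sigma n.+1 u -> Sigma n.+1 (tcap s u)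
| Sigma_dot n s u : Sigma n.+1 s -> Sigma n.+1 u -> Sigma n.+1 (tdot s u)
| Sigma_perm n p s : Sigma n.+1 s -> Sigma n.+1 (tperm p s)
| Sigma_dotPi n s u : Pi n.+1 s -> Pi n.+1 u -> Sigma n.+2 (tdot s u)
with Pi V : nat -> term V -> Prop :=
| Pi0 t : dd_free t -> Pi 0 t
| PiS n t : Pi n t -> Pi n.+1 t
| PiSig n t : Sigma n t -> Pi n.+1 t
| Pi_cup n s u : Pi n.+1 s -> Pi n.+1 u -> Pi n.+1 (tcup s u)
| Pi_cap n s u : Pi n.+1 s -> Pi n.+1 u -> Pi n.+1 (tcap s u)
| Pi_dag n s u : Pi n.+1 s -> Pi n.+1 u -> Pi n.+1 (tdag s u)
| Pi_perm n p s : Pi n.+1 s -> Pi n.+1 (tperm p s)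
| Pi_dagSig n s u : Sigma n.+1 s -> Sigma n.+1 u -> Pi n.+2 (tdag s u).

(* The truth of a term of (Sigma_n)_{<=k} at a pair (x, y) depends only on a "type" of
   (x, y) taken from a finite set; the class of a term is then determined by the set of
   types at which it holds, so there are finitely many classes.  For n = 0 the type is the
   atomic diagram of x and y.  A Sigma_{n+1} term is built by union, intersection,
   composition and permutations from Sigma_n and Pi_n terms, and Pi_n terms are duals of
   Sigma_n terms, so by induction its atoms are equivalent to members of a finite list R.
   Witnessing the term at (x, y) takes at most 2k points besides x and y, the endpoints of
   the atoms containing variables.  The type records, for the tuples of 2k+2 points starting
   with x, y, their equalities and R-relations, together with the number of points outside
   the tuple and the size of the structure, both counted up to 3.  Every other witness is
   only constrained by variable-free atoms, whose meaning depends on equality and size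
   alone, so it can be chosen afresh in any structure with the same type. *)

From mathcomp Require Import all_boot boolp.
From Stdlib Require List.
Set Implicit Arguments. Unset Strict Implicit. Unset Printing Implicit Defensive.

Section FiniteClasses.
Variable V : Type.

Definition finite_classes (S : term V -> Prop) :=
  exists L : seq (term V),
    (forall s, List.In s L -> S s) /\
    (forall t, S t -> exists2 s, List.In s L & rel_equiv t s).

Lemma finite_classes_kernel (S : term V -> Prop) (Q : finType) (f : term V -> Q) :
  (forall t t', S t -> S t' -> f t = f t' -> rel_equiv t t') -> finite_classes S.
Proof.
move=> f_equiv.
have reps (qs : seq Q) : exists L : seq (term V), (forall s, List.In s L -> S s) /\
    forall t, S t -> f t \in qs -> exists2 s, List.In s L & f s = f t.
  elim: qs => [|q qs [L [LS Lf]]]; first by exists [::].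
  have [[s [Ss <-]]|noS] := pselect (exists s, S s /\ f s = q).
  - exists (s :: L); split=> [s' [<-|/LS]|t St] //.
    rewrite inE => /predU1P [->|/(Lf t St) [s' Ls' Es']]; first by exists s; [left|].
    by exists s'; [right|].
  - exists L; split=> // t St; rewrite inE => /predU1P [Etq|]; last exact: Lf.
    by case: noS; exists t.
have [L [LS Lf]] := reps (enum Q).
exists L; split=> // t St; have [s Ls Est] := Lf t St (mem_enum _ _).
by exists s => //; apply: f_equiv (esym Est) => //; apply: LS.
Qed.

Variables (Q : finType) (holds : Q -> forall T : Type, (V -> T -> T -> Prop) -> T -> T -> Prop).

Definition type_of T (ev : V -> T -> T -> Prop) (x y : T) : {set Q} :=
  [set q | `[< holds q ev x y >] ].

Lemma type_ofP T (ev : V -> T -> T -> Prop) x y T' (ev' : V -> T' -> T' -> Prop) x' y' q :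
  type_of ev x y = type_of ev' x' y' -> holds q ev x y -> holds q ev' x' y'.
Proof.
move=> Etype h; have : q \in type_of ev x y by rewrite inE; apply/asboolP.
by rewrite Etype inE => /asboolP.
Qed.

Definition type_invariant (t : term V) :=
  forall T (ev : V -> T -> T -> Prop) x y T' (ev' : V -> T' -> T' -> Prop) x' y',
    type_of ev x y = type_of ev' x' y' -> sem ev t x y -> sem ev' t x' y'.

Lemma finite_classes_of_type (S : term V -> Prop) :
  (forall t, S t -> type_invariant t) -> finite_classes S.
Proof.
move=> Sinv.
pose profile t : {set {set Q}} := [set P | `[< exists T (ev : V -> T -> T -> Prop) x y,
                                                  type_of ev x y = P /\ sem ev t x y >] ].
have half s s' : S s' -> profile s = profile s' ->
    forall T (ev : V -> T -> T -> Prop) x y, sem ev s x y -> sem ev s' x y.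
  move=> Ss' Eps T ev x y sxy.
  have : type_of ev x y \in profile s' by rewrite -Eps inE; apply/asboolP; exists T, ev, x, y.
  rewrite inE => /asboolP [T0 [ev0 [x0 [y0 [E0 s'0]]]]].
  exact: Sinv Ss' _ _ _ _ _ _ _ _ E0 s'0.
apply: (@finite_classes_kernel S _ profile) => t t' St St' Ep T ev _ x y.
by split; apply: half.
Qed.

End FiniteClasses.

Fixpoint dual V (t : term V) : term V :=
  match t with
  | tcup s u => tcap (dual s) (dual u)
  | tcap s u => tcup (dual s) (dual u)
  | tdot s u => tdag (dual s) (dual u)
  | tdag s u => tdot (dual s) (dual u)
  | tperm p s => tperm p (dual s)
  | _ => tcompl t
  end.

Lemma vo_dual V (t : term V) : vo (dual t) = vo t.
Proof. by elim: t => //= *; congruence. Qed.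

Lemma dd_free_dual V (t : term V) : dd_free t -> dd_free (dual t).
Proof. by elim: t => //= s IHs u IHu /andP[/IHs-> /IHu->]. Qed.

Lemma sem_dual V T (ev : V -> T -> T -> Prop) (t : term V) x y :
  sem ev (dual t) x y <-> ~ sem ev t x y.
Proof.
elim: t x y => //= s IHs u IHu x y.
- by rewrite not_orP IHs IHu.
- by rewrite not_andP IHs IHu.
- by rewrite -forallNP; split=> h z; have := h z; rewrite not_andP IHs IHu.
- by rewrite -existsNP; split=> -[z h]; exists z; move: h; rewrite not_orP IHs IHu.
Qed.

Scheme Sigma_min := Minimality for Sigma Sort Prop
  with Pi_min := Minimality for Pi Sort Prop.
Combined Scheme Sigma_Pi_min from Sigma_min, Pi_min.

Lemma Sigma_Pi_dual V :
  (forall n (t : term V), Sigma n t -> Pi n (dual t)) /\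
  (forall n (t : term V), Pi n t -> Sigma n (dual t)).
Proof. by apply: Sigma_Pi_min => /=; eauto using Sigma, Pi, dd_free_dual. Qed.

Lemma finite_classes_Pi V n k :
  finite_classes (fun t : term V => Sigma n t /\ vo t <= k) ->
  finite_classes (fun t : term V => Pi n t /\ vo t <= k).
Proof.
move=> [L [LS Lrep]]; exists (map (@dual V) L); split.
  move=> _ /List.in_map_iff [s [<- /LS [Ss vs]]].
  by split; [exact: (Sigma_Pi_dual V).1 | rewrite vo_dual].
move=> t [Pt vt]; have [|s Ls Es] := Lrep (dual t).
  by split; [exact: (Sigma_Pi_dual V).2 | rewrite vo_dual].
exists (dual s); first exact: List.in_map.
by move=> T ev HT x y; rewrite sem_dual -(Es T ev HT) sem_dual notK.
Qed.

Lemma eq_iff_pick T T' (x y : T) (x' y' : T') (b c : bool) :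
  (x = y <-> x' = y') ->
  ((if b then x else y) = (if c then x else y) <->
   (if b then x' else y') = (if c then x' else y')).
Proof. by case: b; case: c => // Exy; split=> /esym/Exy/esym. Qed.

Definition in_image I T (e : I -> T) (z : T) := exists i, z = e i.

Definition outside I T (e : I -> T) (m : nat) :=
  exists s : seq T, [/\ size s = m, List.NoDup s & forall z, List.In z s -> ~ in_image e z].

Definition matched I T T' (e : I -> T) (e' : I -> T') (u : T) (u' : T') :=
  (exists i, u = e i /\ u' = e' i) \/ (~ in_image e u /\ ~ in_image e' u').

Lemma outside_avoid I T (e : I -> T) m (l : seq T) :
  outside e m -> size l < m -> exists z, ~ in_image e z /\ ~ List.In z l.
Proof.
move=> [s [<- NDs Os]] lt_ls; apply: contrapT => Nz.
have /leP : (size s <= size l)%coq_nat.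
  apply: List.NoDup_incl_length NDs _ => z zs; apply: contrapT => Nzl.
  by apply: Nz; exists z; split=> //; apply: Os.
by rewrite leqNgt lt_ls.
Qed.

Lemma NoDup_pair T (a b : T) : a <> b -> List.NoDup [:: a; b].
Proof. by move=> ab; constructor; [case=> // /esym | constructor; [case | constructor]]. Qed.

Section Matching.
Variables (I T T' : Type) (e : I -> T) (e' : I -> T').

Lemma matched_image u u' : matched e e' u u' -> in_image e u -> exists i, u = e i /\ u' = e' i.
Proof. by case=> // -[nu _] /nu. Qed.

Lemma matched_in_image u u' : matched e e' u u' -> in_image e u <-> in_image e' u'.
Proof. by case=> [[i [-> ->]]|[nu nu']]; split=> h; [exists i|exists i|case: nu|case: nu']. Qed.

Lemma fresh_witness : (forall m, m < 4 -> outside e m -> outside e' m) ->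
  forall u v u' v' z, matched e e' u u' -> matched e e' v v' -> (u = v <-> u' = v') ->
  ~ in_image e z -> z <> u -> z <> v -> exists z', [/\ ~ in_image e' z', z' <> u' & z' <> v'].
Proof.
move=> out_e u v u' v' z Mu Mv Euv nz zu zv.
(* [z :: l] lists [z] and the points among [u], [v] outside the image of [e]; as many
   points lie outside the image of [e'], so one of them avoids [l']. *)
have avoid (l : seq T) (l' : seq T') :
    List.NoDup (z :: l) -> (forall w, List.In w l -> ~ in_image e w) ->
    size l' = size l -> size l < 3 ->
    (~ in_image e' u' -> List.In u' l') -> (~ in_image e' v' -> List.In v' l') ->
    exists z', [/\ ~ in_image e' z', z' <> u' & z' <> v'].
  move=> NDl Ol sz_l lt3 Cu Cv.
  have out_l : outside e (size l).+1 by exists (z :: l); split=> // w [<-|/Ol].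
  have lt_l' : size l' < (size l).+1 by rewrite sz_l.
  have [z' [nz' z'l']] := outside_avoid (out_e (size l).+1 lt3 out_l) lt_l'.
  by exists z'; split=> // E; subst z'; [apply: z'l' (Cu nz') | apply: z'l' (Cv nz')].
have iuP := matched_in_image Mu; have ivP := matched_in_image Mv.
have [iu|nu] := pselect (in_image e u); have [iv|nv] := pselect (in_image e v).
- apply: (avoid [::] [::]) => //; first by constructor; [case | constructor].
  + by move/(_ (iuP.1 iu)).
  + by move/(_ (ivP.1 iv)).
- apply: (avoid [:: v] [:: v']) => //.
  + exact: NoDup_pair.
  + by move=> w [<-|[]].
  + by move/(_ (iuP.1 iu)).
  + by left.
- apply: (avoid [:: u] [:: u']) => //.
  + exact: NoDup_pair.
  + by move=> w [<-|[]].
  + by left.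
  + by move/(_ (ivP.1 iv)).
- have [uv|uv] := pselect (u = v).
    apply: (avoid [:: u] [:: u']) => //.
    + exact: NoDup_pair.
    + by move=> w [<-|[]].
    + by left.
    + by move=> _; left; apply/Euv.
  apply: (avoid [:: u; v] [:: u'; v']) => //.
  + by constructor; [case=> [/esym|[/esym|[]]] | exact: NoDup_pair].
  + by move=> w [<-|[<-|[]]].
  + by left.
  + by right; left.
Qed.

Lemma matched_extend : (forall i j, e i = e j <-> e' i = e' j) ->
  (forall m, m < 4 -> outside e m -> outside e' m) ->
  forall u v u' v', matched e e' u u' -> matched e e' v v' -> (u = v <-> u' = v') ->
  forall z, exists z', [/\ matched e e' z z', (u = z <-> u' = z') & (z = v <-> z' = v')].
Proof.
move=> Ee out_e u v u' v' Mu Mv Euv z.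
have eq_image w w' i : matched e e' w w' -> (w = e i <-> w' = e' i).
  case=> [[j [-> ->]]|[nw nw']]; first exact: Ee.
  by split=> E; [case: nw | case: nw']; exists i.
have [[i ->]|nz] := pselect (in_image e z).
  exists (e' i); split; first by left; exists i.
  - exact: eq_image.
  - by split=> /esym/(eq_image _ _ i Mv)/esym.
have [->|zu] := pselect (z = u); first by exists u'.
have [->|zv] := pselect (z = v); first by exists v'.
have [z' [nz' z'u' z'v']] := fresh_witness out_e Mu Mv Euv nz zu zv.
by exists z'; split; [right | split=> /esym | split=> E].
Qed.

End Matching.

Lemma eq_extend T T' : (forall m, m < 4 -> outside (@of_void T) m -> outside (@of_void T') m) ->
  forall (u v : T) (u' v' : T'), (u = v <-> u' = v') ->
  forall z, exists z', (u = z <-> u' = z') /\ (z = v <-> z' = v').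
Proof.
move=> card u v u' v' Euv z.
have Mvoid w w' : matched (@of_void T) (@of_void T') w w' by right; split=> -[[]].
have [|z' [_ Ez Ez']] := matched_extend _ card (Mvoid u u') (Mvoid v v') Euv z; first by case.
by exists z'.
Qed.

Lemma vo0_transport V (t : term V) : vo t = 0 ->
  forall T T' (ev : V -> T -> T -> Prop) (ev' : V -> T' -> T' -> Prop),
  (forall m, m < 4 -> outside (@of_void T) m <-> outside (@of_void T') m) ->
  forall x y x' y', (x = y <-> x' = y') -> sem ev t x y -> sem ev' t x' y'.
Proof.
elim: t => //= [s IHs r IHr|s IHs r IHr|s IHs|_|_|s IHs r IHr|s IHs r IHr|p s IHs].
all: try (move=> /eqP; rewrite addn_eq0 => /andP[/eqP/IHs ts /eqP/IHr tr] {IHs IHr}).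
all: try (move=> /IHs ts {IHs}).
all: move=> T T' ev ev' card x y x' y' Exy.
- by case=> [/(ts _ _ _ _ card _ _ _ _ Exy)|/(tr _ _ _ _ card _ _ _ _ Exy)]; [left|right].
- by case=> /(ts _ _ _ _ card _ _ _ _ Exy) ? /(tr _ _ _ _ card _ _ _ _ Exy).
- by move=> ns /(ts _ _ ev' ev (fun m lt => iff_sym (card m lt)) _ _ x y (iff_sym Exy)).
- by move/Exy.
- by move=> nxy /Exy.
- case=> z [sxz rzy]; have [z' [E1 E2]] := eq_extend (fun m lt => (card m lt).1) Exy z.
  by exists z'; split;
    [exact: (ts _ _ ev _ card _ _ _ _ E1 sxz) | exact: (tr _ _ ev _ card _ _ _ _ E2 rzy)].
- move=> h z'; have [z [E1 E2]] := eq_extend (fun m lt => (card m lt).2) (iff_sym Exy) z'.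
  case: (h z) => [/(ts _ _ _ ev' card _ _ _ _ (iff_sym E1))|
                  /(tr _ _ _ ev' card _ _ _ _ (iff_sym E2))]; by [left|right].
- exact: (ts _ _ _ _ card _ _ _ _ (eq_iff_pick _ _ Exy)).
Qed.

Inductive pterm (V : Type) :=
| PAtom of term V
| PCup of pterm V & pterm V
| PCap of pterm V & pterm V
| PDot of pterm V & pterm V
| PPerm of {ffun 'I_2 -> 'I_2} & pterm V.

Fixpoint to_term V (p : pterm V) : term V :=
  match p with
  | PAtom a => a
  | PCup p1 p2 => tcup (to_term p1) (to_term p2)
  | PCap p1 p2 => tcap (to_term p1) (to_term p2)
  | PDot p1 p2 => tdot (to_term p1) (to_term p2)
  | PPerm f p1 => tperm f (to_term p1)
  end.

Fixpoint atoms V (p : pterm V) : seq (term V) :=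
  match p with
  | PAtom a => [:: a]
  | PCup p1 p2 | PCap p1 p2 | PDot p1 p2 => atoms p1 ++ atoms p2
  | PPerm _ p1 => atoms p1
  end.

Lemma atoms_vo V (p : pterm V) : List.Forall (fun a => vo a <= vo (to_term p)) (atoms p).
Proof.
elim: p => [a|p1 IH1 p2 IH2|p1 IH1 p2 IH2|p1 IH1 p2 IH2|f p1 IH1] //=.
  by repeat constructor.
all: apply/List.Forall_app; split; [apply: List.Forall_impl IH1 | apply: List.Forall_impl IH2].
all: by move=> a /leq_trans; apply; rewrite ?leq_addr ?leq_addl.
Qed.

Lemma Sigma_pterm V n (t : term V) : Sigma n.+1 t ->
  exists2 p : pterm V, to_term p = t & List.Forall (fun a => Sigma n a \/ Pi n a) (atoms p).
Proof.
move=> St; move Em: n.+1 St => m St; elim: St n Em => //; clear m t.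
- by move=> m t St _ n [= ->]; exists (PAtom t) => //; constructor; [left | constructor].
- by move=> m t Pt n [= ->]; exists (PAtom t) => //; constructor; [right | constructor].
- move=> m s u _ IHs _ IHu n Em; have [p1 <- A1] := IHs n Em; have [p2 <- A2] := IHu n Em.
  by exists (PCup p1 p2) => //; apply/List.Forall_app.
- move=> m s u _ IHs _ IHu n Em; have [p1 <- A1] := IHs n Em; have [p2 <- A2] := IHu n Em.
  by exists (PCap p1 p2) => //; apply/List.Forall_app.
- move=> m s u _ IHs _ IHu n Em; have [p1 <- A1] := IHs n Em; have [p2 <- A2] := IHu n Em.
  by exists (PDot p1 p2) => //; apply/List.Forall_app.
- by move=> m f s _ IHs n Em; have [p1 <- A1] := IHs n Em; exists (PPerm f p1).
- move=> m s u Ps Pu n [= ->]; exists (PDot (PAtom s) (PAtom u)) => //.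
  by do 2 (constructor; [by right | ]); constructor.
Qed.

(* Atoms without variables are not confined to [E]: their meaning depends only on equality
   of the endpoints and the size of the structure ([vo0_transport]), so their endpoints are
   not counted in [sem_witnesses]. *)
Fixpoint sem_within V T (ev : V -> T -> T -> Prop) (E : T -> Prop) (p : pterm V) : T -> T -> Prop :=
  match p with
  | PAtom a => if vo a == 0 then sem ev a else fun x y => [/\ E x, E y & sem ev a x y]
  | PCup p1 p2 => fun x y => sem_within ev E p1 x y \/ sem_within ev E p2 x y
  | PCap p1 p2 => fun x y => sem_within ev E p1 x y /\ sem_within ev E p2 x y
  | PDot p1 p2 => fun x y => exists z, sem_within ev E p1 x z /\ sem_within ev E p2 z y
  | PPerm f p1 => fun x y =>
      let xs (i : 'I_2) := if nat_of_ord i == 0 then x else y in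
      sem_within ev E p1 (xs (f (@Ordinal 2 0 isT))) (xs (f (@Ordinal 2 1 isT)))
  end.

Lemma sem_within_mono V T (ev : V -> T -> T -> Prop) (E E' : T -> Prop) (p : pterm V) :
  (forall z, E z -> E' z) -> forall x y, sem_within ev E p x y -> sem_within ev E' p x y.
Proof.
move=> EE'; elim: p => [a|p1 IH1 p2 IH2|p1 IH1 p2 IH2|p1 IH1 p2 IH2|f p1 IH1] x y /=.
- by case: (vo a == 0) => // -[/EE' ? /EE' ?].
- by case=> [/IH1|/IH2]; [left|right].
- by case=> /IH1 ? /IH2.
- by case=> z [/IH1 ? /IH2 ?]; exists z.
- exact: IH1.
Qed.

Lemma sem_witnesses V T (ev : V -> T -> T -> Prop) (p : pterm V) x y :
  sem ev (to_term p) x y -> exists2 W : seq T, size W <= (vo (to_term p)).*2 &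
    sem_within ev (fun z => List.In z W) p x y.
Proof.
elim: p x y => [a|p1 IH1 p2 IH2|p1 IH1 p2 IH2|p1 IH1 p2 IH2|f p1 IH1] x y /=.
- case: eqP => [_ sxy|/eqP a_vo sxy]; first by exists [::].
  by exists [:: x; y]; [case: (vo a) a_vo | split; [left | right; left |]].
- case=> [/IH1 [W szW sW]|/IH2 [W szW sW]]; exists W; rewrite ?doubleD.
  + exact: leq_trans szW (leq_addr _ _).
  + by left.
  + exact: leq_trans szW (leq_addl _ _).
  + by right.
- case=> /IH1 [W1 sz1 sW1] /IH2 [W2 sz2 sW2]; exists (W1 ++ W2).
    by rewrite size_cat doubleD leq_add.
  split; [apply: sem_within_mono sW1 | apply: sem_within_mono sW2] => w Ww;
    apply: List.in_or_app; by [left | right].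
- case=> z [/IH1 [W1 sz1 sW1] /IH2 [W2 sz2 sW2]]; exists (W1 ++ W2).
    by rewrite size_cat doubleD leq_add.
  exists z; split; [apply: sem_within_mono sW1 | apply: sem_within_mono sW2] => w Ww;
    apply: List.in_or_app; by [left | right].
- exact: IH1.
Qed.

Lemma sem_within_transport V I T T' (ev : V -> T -> T -> Prop) (ev' : V -> T' -> T' -> Prop)
    (e : I -> T) (e' : I -> T') :
  (forall i j, e i = e j <-> e' i = e' j) ->
  (forall m, m < 4 -> outside e m -> outside e' m) ->
  (forall m, m < 4 -> outside (@of_void T) m <-> outside (@of_void T') m) ->
  forall p : pterm V,
  List.Forall (fun a => forall i j, sem ev a (e i) (e j) -> sem ev' a (e' i) (e' j)) (atoms p) ->
  forall x y x' y', matched e e' x x' -> matched e e' y y' -> (x = y <-> x' = y') ->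
  sem_within ev (in_image e) p x y -> sem ev' (to_term p) x' y'.
Proof.
move=> Ee out_e card; elim=> [a|p1 IH1 p2 IH2|p1 IH1 p2 IH2|p1 IH1 p2 IH2|f p1 IH1] /=.
- move=> Aa x y x' y' Mx My Exy; have Ea := List.Forall_inv Aa.
  case: eqP => [vo_a|_ [ix iy sxy]].
    exact: vo0_transport vo_a _ _ ev ev' card _ _ _ _ Exy.
  have [i [Ex ->]] := matched_image Mx ix; have [j [Ey ->]] := matched_image My iy.
  by apply: Ea; rewrite -Ex -Ey.
- move=> /List.Forall_app [A1 A2] x y x' y' Mx My Exy.
  by case=> [/(IH1 A1 _ _ _ _ Mx My Exy)|/(IH2 A2 _ _ _ _ Mx My Exy)]; [left|right].
- move=> /List.Forall_app [A1 A2] x y x' y' Mx My Exy.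
  by case=> /(IH1 A1 _ _ _ _ Mx My Exy) ? /(IH2 A2 _ _ _ _ Mx My Exy).
- move=> /List.Forall_app [A1 A2] x y x' y' Mx My Exy [z [s1 s2]].
  have [z' [Mz E1 E2]] := matched_extend Ee out_e Mx My Exy z.
  by exists z'; split; [exact: IH1 A1 _ _ _ _ Mx Mz E1 s1 | exact: IH2 A2 _ _ _ _ Mz My E2 s2].
- move=> A1 x y x' y' Mx My Exy.
  have Mpick b : matched e e' (if b then x else y) (if b then x' else y') by case: b.
  exact: IH1 A1 _ _ _ _ (Mpick _) (Mpick _) (eq_iff_pick _ _ Exy).
Qed.

Definition ord_one N : 'I_N.+2 := @Ordinal N.+2 1 isT.

Section Diagrams.
Variables (V : Type) (Idx : finType) (rel : Idx -> term V) (N : nat).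

Definition diagram : finType :=
  ({ffun 'I_N.+2 * 'I_N.+2 -> bool} * {ffun Idx * 'I_N.+2 * 'I_N.+2 -> bool} *
   {ffun 'I_4 -> bool} * {ffun 'I_4 -> bool})%type.

Definition diagram_of T (ev : V -> T -> T -> Prop) (e : 'I_N.+2 -> T) : diagram :=
  ([ffun ij => `[< e ij.1 = e ij.2 >] ],
   [ffun rij => `[< sem ev (rel rij.1.1) (e rij.1.2) (e rij.2) >] ],
   [ffun m : 'I_4 => `[< outside e m >] ],
   [ffun m : 'I_4 => `[< outside (@of_void T) m >] ]).

Definition realizes (q : diagram) T (ev : V -> T -> T -> Prop) (x y : T) :=
  exists e : 'I_N.+2 -> T, [/\ e ord0 = x, e (ord_one N) = y & diagram_of ev e = q].

Lemma diagram_transfer T (ev : V -> T -> T -> Prop) x y T' (ev' : V -> T' -> T' -> Prop) x' y' :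
  type_of realizes ev x y = type_of realizes ev' x' y' ->
  forall e : 'I_N.+2 -> T, e ord0 = x -> e (ord_one N) = y ->
  exists e' : 'I_N.+2 -> T', [/\ e' ord0 = x' /\ e' (ord_one N) = y',
    forall i j, e i = e j <-> e' i = e' j,
    forall r i j, sem ev (rel r) (e i) (e j) <-> sem ev' (rel r) (e' i) (e' j),
    forall m, m < 4 -> outside e m <-> outside e' m &
    forall m, m < 4 -> outside (@of_void T) m <-> outside (@of_void T') m].
Proof.
move=> Etype e ex ey.
have [e' [ex' ey' De]] : realizes (diagram_of ev e) ev' x' y'.
  by apply: type_ofP Etype _; exists e.
case: (esym De) => /ffunP De1 /ffunP De2 /ffunP De3 /ffunP De4.
exists e'; split=> // [i j | r i j | m lt4 | m lt4]; apply: asbool_eq_equiv.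
- by move: (De1 (i, j)); rewrite !ffunE.
- by move: (De2 (r, i, j)); rewrite !ffunE.
- by move: (De3 (Ordinal lt4)); rewrite !ffunE.
- by move: (De4 (Ordinal lt4)); rewrite !ffunE.
Qed.

End Diagrams.

Arguments realizes {V Idx} rel N q T ev x y.

Lemma In_nth T (x0 z : T) (s : seq T) : List.In z s -> exists2 m, m < size s & nth x0 s m = z.
Proof. by elim: s => //= a s IH [->|/IH [m lt_m <-]]; [exists 0 | exists m.+1]. Qed.

Lemma enumerate_points T (x y : T) (W : seq T) N : size W <= N ->
  exists e : 'I_N.+2 -> T,
    [/\ e ord0 = x, e (ord_one N) = y & forall z, List.In z W -> in_image e z].
Proof.
move=> szW; exists (fun i => nth x [:: x, y & W] i); split=> // z /(In_nth x) [m lt_m <-].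
have lt_m2 : m.+2 < N.+2 by rewrite !ltnS (leq_trans lt_m szW).
by exists (Ordinal lt_m2).
Qed.

Lemma dd_free_transport V I T T' (ev : V -> T -> T -> Prop) (ev' : V -> T' -> T' -> Prop)
    (e : I -> T) (e' : I -> T') :
  (forall i j, e i = e j <-> e' i = e' j) ->
  (forall a i j, ev a (e i) (e j) <-> ev' a (e' i) (e' j)) ->
  forall t, dd_free t -> forall i j, sem ev t (e i) (e j) <-> sem ev' t (e' i) (e' j).
Proof.
move=> Ee Eev; elim=> //= [s IHs r IHr|s IHs r IHr|s IHs|_|p s IHs].
- by move=> /andP[/IHs Es /IHr Er] i j; rewrite Es Er.
- by move=> /andP[/IHs Es /IHr Er] i j; rewrite Es Er.
- by move=> /IHs Es i j; rewrite Es.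
- by move=> i j; rewrite Ee.
- by move=> /IHs Es i j; case: (_ == 0); case: (_ == 0).
Qed.

Lemma finite_classes_dd_free (V : finType) (S : term V -> Prop) :
  (forall t, S t -> dd_free t) -> finite_classes S.
Proof.
move=> Sdd; apply: (finite_classes_of_type (holds := realizes (@tvar V) 0)).
move=> t /Sdd ddt T ev x y T' ev' x' y' Etype sxy.
have [e [ex ey _]] := @enumerate_points T x y [::] 0 isT.
have [e' [[ex' ey'] Ee Erel _ _]] := diagram_transfer Etype ex ey.
by rewrite -ex' -ey'; apply/(dd_free_transport Ee Erel ddt); rewrite ex ey.
Qed.

Lemma pterm_type_invariant V (Idx : finType) (rel : Idx -> term V) (A : term V -> Prop) k :
  (forall a, A a -> vo a <= k -> exists r, rel_equiv a (rel r)) ->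
  forall p : pterm V, List.Forall A (atoms p) -> vo (to_term p) <= k ->
  type_invariant (realizes rel k.*2) (to_term p).
Proof.
move=> Arel p Ap vp T ev x y T' ev' x' y' Etype sxy.
have [W szW sW] := sem_witnesses sxy.
have [e [ex ey We]] : exists e : 'I_k.*2.+2 -> T,
    [/\ e ord0 = x, e (ord_one _) = y & forall z, List.In z W -> in_image e z].
  by apply: enumerate_points; rewrite (leq_trans szW) ?leq_double.
have [e' [[ex' ey'] Ee Erel Eout Ecard]] := diagram_transfer Etype ex ey.
have atoms_transport : List.Forall
    (fun a => forall i j, sem ev a (e i) (e j) -> sem ev' a (e' i) (e' j)) (atoms p).
  apply/List.Forall_forall => a a_p i j.
  have Aa := proj1 (List.Forall_forall _ _) Ap a a_p.
  have va := leq_trans (proj1 (List.Forall_forall _ _) (atoms_vo p) a a_p) vp.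
  have [r Ear] := Arel a Aa va.
  by move=> /(Ear _ _ (inhabits x)) /(Erel r i j) /(Ear _ _ (inhabits x')).
apply: (sem_within_transport Ee (fun m lt => (Eout m lt).1) Ecard atoms_transport
          (x := x) (y := y)).
- by left; exists ord0; rewrite ex ex'.
- by left; exists (ord_one _); rewrite ey ey'.
- by rewrite -ex -ey -ex' -ey'; apply: Ee.
- exact: sem_within_mono sW.
Qed.

Lemma finite_classes_Sigma_succ V n k (R : seq (term V)) :
  (forall a, Sigma n a \/ Pi n a -> vo a <= k -> exists2 r, List.In r R & rel_equiv a r) ->
  finite_classes (fun t : term V => Sigma n.+1 t /\ vo t <= k).
Proof.
move=> Rrep; pose rel (r : 'I_(size R)) := nth tbot R r.
apply: (finite_classes_of_type (holds := realizes rel k.*2)) => _ [/Sigma_pterm [p <- Ap] vp].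
apply: pterm_type_invariant Ap vp => a Aa va.
have [r Rr Ear] := Rrep a Aa va; have [m lt_m Em] := In_nth tbot Rr.
by exists (Ordinal lt_m); rewrite /rel /= Em.
Qed.

Lemma finite_classes_Sigma (V : finType) n k :
  finite_classes (fun t : term V => Sigma n t /\ vo t <= k).
Proof.
elim: n => [|n IH].
  by apply: finite_classes_dd_free => t [St _]; inversion St.
have [LS [_ repS]] := IH; have [LP [_ repP]] := finite_classes_Pi IH.
apply: (@finite_classes_Sigma_succ _ n k (LS ++ LP)) => a [Sa|Pa] va.
- by have [s Ls Eas] := repS a (conj Sa va); exists s => //; apply: List.in_or_app; left.
- by have [s Ls Eas] := repP a (conj Pa va); exists s => //; apply: List.in_or_app; right.
Qed.

Theorem theorem4p1 (V : finType) (HV : 0 < #|V|) (n k : nat) :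
  exists L : seq (term V),
    (forall s, List.In s L -> Sigma n s /\ vo s <= k) /\
    (forall t, Sigma n t -> vo t <= k -> exists2 s, List.In s L & rel_equiv t s).
Proof.
have [L [LS Lrep]] := finite_classes_Sigma V n k.
by exists L; split=> // t St vt; apply: Lrep.
Qed.
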